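(* Let $0<\varepsilon<2/9$ and let $\mathbf{U}$ be the $7\times 7$ matrix $$\mathbf{U}=\begin{pmatrix} 0 & -1 & \varepsilon & -10 & -\tfrac13+\varepsilon & -\tfrac13+\varepsilon & -\tfrac13+\varepsilon\\ \varepsilon & 0 & -1 & -10 & -\tfrac13+\varepsilon & -\tfrac13+\varepsilon & -\tfrac13+\varepsilon\\ -1 & \varepsilon & 0 & -10 & -\tfrac13+\varepsilon & -\tfrac13+\varepsilon & -\tfrac13+\varepsilon\\ -2 & -2 & 2 & 0 & -\tfrac13 & -\tfrac13 & -\tfrac13\\ -\tfrac13 & -\tfrac13 & -\tfrac13 & 10 & 0 & -1 & \varepsilon\\ -\tfrac13 & -\tfrac13 & -\tfrac13 & 10 & \varepsilon & 0 & -1\\ -\tfrac13 & -\tfrac13 & -\tfrac13 & 10 & -1 & \varepsilon & 0 \end{pmatrix},\qquad \mathbf{R}=\begin{pmatrix} 0 & -1 & \varepsilon\\ \varepsilon & 0 & -1\\ -1 & \varepsilon & 0\end{pmatrix}.$$ Let $\mathbf{x}(\cdot)$ be a solution of the best-reply dynamics in the game with payoff matrix $\mathbf{U}$ such that neither $x_1(0)=x_2(0)=x_3(0)$ nor $x_5(0)=x_6(0)=x_7(0)$. Set $\lambda=x_1+x_2+x_3$, $\mu=x_5+x_6+x_7$ (these are positive for all $t\ge0$), $\bar{\mathbf{x}}=(x_1,x_2,x_3)/\lambda$ and $\hat{\mathbf{x}}=(x_5,x_6,x_7)/\mu$. Then for almost every $t\ge 0$, $$\dot{\bar{\mathbf{x}}}\in\Big(1+\frac{\dot\lambda}{\lambda}\Big)\big(BR_{\mathbf{R}}(\bar{\mathbf{x}})-\bar{\mathbf{x}}\big)\quad\text{and}\quad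 \dot{\hat{\mathbf{x}}}\in\Big(1+\frac{\dot\mu}{\mu}\Big)\big(BR_{\mathbf{R}}(\hat{\mathbf{x}})-\hat{\mathbf{x}}\big).$$
   Context: $S_n=\{\mathbf{x}\in\mathbb{R}_+^n:\sum_i x_i=1\}$. For a square matrix $\mathbf{A}$ of size $n$, $BR_{\mathbf{A}}(\mathbf{x})=\{\mathbf{y}\in S_n:\mathbf{y}\cdot\mathbf{A}\mathbf{x}=\max_{\mathbf{z}\in S_n}\mathbf{z}\cdot\mathbf{A}\mathbf{x}\}$. The best-reply dynamics in the game with payoff matrix $\mathbf{U}$ is the differential inclusion $\dot{\mathbf{x}}\in BR_{\mathbf{U}}(\mathbf{x})-\mathbf{x}$; a solution is an absolutely continuous $\mathbf{x}:\mathbb{R}_+\to S_7$ satisfying it for almost every $t$. *)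

From HB Require Import structures.
From mathcomp Require Import all_boot all_order all_algebra.
From mathcomp Require Import all_classical all_reals all_analysis.
Unset Printing Implicit Defensive.
Import Order.TTheory GRing.Theory Num.Theory.
Local Open Scope classical_set_scope.
Local Open Scope ring_scope.

Section Defs.
Context {R : realType}.

Definition simplex (n : nat) : set ('I_n -> R) :=
  [set x | (forall i, 0 <= x i) /\ \sum_(i < n) x i = 1].

Definition mxapp {n : nat} (A : 'M[R]_n) (x : 'I_n -> R) : 'I_n -> R :=
  fun i => \sum_(j < n) A i j * x j.

Definition dotv {n : nat} (y z : 'I_n -> R) : R := \sum_(i < n) y i * z i.

Definition BR {n : nat} (A : 'M[R]_n) (x : 'I_n -> R) : set ('I_n -> R) :=
  [set y | simplex n y /\
           (forall z, simplex n z -> dotv z (mxapp A x) <= dotv y (mxapp A x))].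

Definition abs_continuous_on (a b : R) (f : R -> R) : Prop :=
  forall e : R, 0 < e -> exists2 d : R, 0 < d &
    forall (m : nat) (I : 'I_m -> R * R),
      (forall k, a <= (I k).1 /\ (I k).1 <= (I k).2 /\ (I k).2 <= b) ->
      (forall k l, k != l -> (I k).2 <= (I l).1 \/ (I l).2 <= (I k).1) ->
      \sum_(k < m) ((I k).2 - (I k).1) < d ->
      \sum_(k < m) `|f (I k).2 - f (I k).1| < e.

Definition BR_solution {n : nat} (U : 'M[R]_n) (x : R -> 'I_n -> R) : Prop :=
  (forall t, 0 <= t -> simplex n (x t)) /\
  (forall T, 0 <= T -> forall i, abs_continuous_on 0 T (fun s => x s i)) /\
  {ae (@lebesgue_measure R), forall t, 0 <= t ->
     (forall i, derivable (fun s => x s i) t 1) /\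
     exists2 y, BR U (x t) y &
       forall i, derive1 (fun s => x s i) t = y i - x t i}.

Definition third : R := 3^-1.

(* The 7x7 payoff matrix U (rows/columns indexed 0..6 for 1..7). *)
Definition U_rows (eps : R) : seq (seq R) :=
  [:: [:: 0; -1; eps; -10; - third + eps; - third + eps; - third + eps];
      [:: eps; 0; -1; -10; - third + eps; - third + eps; - third + eps];
      [:: -1; eps; 0; -10; - third + eps; - third + eps; - third + eps];
      [:: -2; -2; 2; 0; - third; - third; - third];
      [:: - third; - third; - third; 10; 0; -1; eps];
      [:: - third; - third; - third; 10; eps; 0; -1];
      [:: - third; - third; - third; 10; -1; eps; 0]].

Definition Umx (eps : R) : 'M[R]_7 :=
  \matrix_(i < 7, j < 7) nth 0 (nth [::] (U_rows eps) i) j.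

Definition R_rows (eps : R) : seq (seq R) :=
  [:: [:: 0; -1; eps];
      [:: eps; 0; -1];
      [:: -1; eps; 0]].

Definition Rmx (eps : R) : 'M[R]_3 :=
  \matrix_(i < 3, j < 3) nth 0 (nth [::] (R_rows eps) i) j.

(* lambda = x1+x2+x3 (indices 0,1,2), mu = x5+x6+x7 (indices 4,5,6) *)
Definition lam (x : R -> 'I_7 -> R) (t : R) : R :=
  \sum_(i < 3) x t (inord i).
Definition muu (x : R -> 'I_7 -> R) (t : R) : R :=
  \sum_(i < 3) x t (inord (i + 4)).

Definition xbar (x : R -> 'I_7 -> R) (t : R) : 'I_3 -> R :=
  fun i => x t (inord i) / lam x t.
Definition xhat (x : R -> 'I_7 -> R) (t : R) : 'I_3 -> R :=
  fun i => x t (inord (i + 4)) / muu x t.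

End Defs.

From mathcomp Require Import all_boot all_order all_algebra.
From mathcomp Require Import all_classical all_reals all_analysis.
From mathcomp Require Import ring lra measurable_realfun.
Import Order.TTheory GRing.Theory Num.Theory.
Import numFieldNormedType.Exports.
Local Open Scope classical_set_scope.
Local Open Scope ring_scope.

(* Within the block of strategies 1,2,3 the payoff vector satisfies
   (U x)_i = lambda (R xbar)_i + c with c independent of i (and likewise for
   5,6,7 with mu and xhat).  Hence a best reply y of U, restricted to the block
   and normalised by its mass Y there, is a best reply to xbar in R; if Y = 0
   any best reply of R will do.  Since lambda' = Y - lambda, the quotient rule
   gives xbar' = (y_B - Y xbar) / lambda = (1 + lambda'/lambda) (y_B / Y - xbar),
   where y_B is the block part of y.  Positivity: e^t lambda(t) is absolutely
   continuous with derivative e^t Y >= 0 almost everywhere, hence nondecreasing,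
   and lambda(0) > 0 because otherwise x_1(0) = x_2(0) = x_3(0) = 0. *)

Lemma real_induction {R : realType} (a b : R) (P : R -> Prop) :
  a <= b -> P a ->
  (forall s, a < s -> s <= b -> (forall u, a <= u -> u < s -> P u) -> P s) ->
  (forall s, a <= s -> s < b -> P s ->
     exists2 s', s < s' & forall u, s < u -> u <= s' -> u <= b -> P u) ->
  P b.
Proof.
move=> ab Pa from_left to_right.
pose S := [set s | a <= s /\ s <= b /\ forall u, a <= u -> u <= s -> P u].
have Sa : S a.
  by split=> //; split=> // u au ua; have -> : u = a by apply/eqP; rewrite eq_le ua au.
have hS : has_ubound S by exists b => u [_ []].
set s := sup S.
have as_ : a <= s := ub_le_sup hS Sa.
have sb : s <= b by apply: ge_sup; [exists a | move=> u [_ []]].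
have Plt u : a <= u -> u < s -> P u.
  move=> au us; have su0 : 0 < s - u by rewrite subr_gt0.
  have [e [_ [_ He]] se] := sup_adherent su0 (conj (ex_intro _ a Sa) hS).
  by apply: He => //; move: se; rewrite /s opprB addrCA subrr addr0 => /ltW.
have Ps : P s.
  have [<-|sa] := eqVneq a s; first exact: Pa.
  by apply: from_left => //; rewrite lt_neqAle sa.
have [<- //|sb'] := eqVneq s b.
have {sb'} slb : s < b by rewrite lt_neqAle sb' sb.
have [s' ss' ext] := to_right s as_ slb Ps.
have Sm : S (Num.min s' b).
  split; first by rewrite le_min (le_trans as_ (ltW ss')) ab.
  split=> [|u au]; first by rewrite ge_min lexx orbT.
  rewrite le_min => /andP[us' ub].
  have [us|su] := leP u s; last exact: ext.
  by move: us; rewrite le_eqVlt => /orP[/eqP -> //|]; exact: Plt.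
by have := ub_le_sup hS Sm; rewrite leNgt lt_min ss' slb.
Qed.

Lemma abs_continuous_on_ucont {R : realType} {a b : R} {g : R -> R} :
  abs_continuous_on a b g ->
  forall e, 0 < e -> exists2 d, 0 < d & forall u v, a <= u -> u <= v -> v <= b ->
    v - u < d -> `|g v - g u| < e.
Proof.
move=> ac e e0; have [d d0 Hd] := ac e e0; exists d => // u v au uv vb vud.
have := Hd 1%N (fun _ => (u, v)); rewrite !big_ord1; apply => //.
by move=> k l; rewrite !ord1.
Qed.

Lemma abs_continuous_onD {R : realType} (a b : R) (f g : R -> R) :
  abs_continuous_on a b f -> abs_continuous_on a b g ->
  abs_continuous_on a b (fun t => f t + g t).
Proof.
move=> af ag e e0.
have e2 : 0 < e / 2 by rewrite divr_gt0.
have [d1 d10 H1] := af _ e2; have [d2 d20 H2] := ag _ e2.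
exists (Num.min d1 d2); first by rewrite lt_min d10 d20.
move=> m I Hab Hdis; rewrite lt_min => /andP[/(H1 m I Hab Hdis) s1 /(H2 m I Hab Hdis) s2].
apply: (@le_lt_trans _ _ (\sum_(k < m)
    (`|f (I k).2 - f (I k).1| + `|g (I k).2 - g (I k).1|))).
  apply: ler_sum => k _; rewrite opprD addrACA; exact: ler_normD.
rewrite big_split /=; lra.
Qed.

Lemma abs_continuous_onM {R : realType} (a b K : R) (w f : R -> R) :
  0 < K ->
  (forall u v, a <= u -> u <= v -> v <= b -> `|w v - w u| <= K * (v - u)) ->
  (forall t, a <= t -> t <= b -> `|w t| <= K /\ `|f t| <= K) ->
  abs_continuous_on a b f -> abs_continuous_on a b (fun t => w t * f t).
Proof.
move=> K0 wL bd af e e0.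
have e1 : 0 < e / (2 * K) by rewrite divr_gt0 // mulr_gt0.
have e2 : 0 < e / (2 * (K * K)) by rewrite !divr_gt0 // !mulr_gt0.
have [d d0 Hd] := af _ e1.
exists (Num.min d (e / (2 * (K * K)))); first by rewrite lt_min d0 e2.
move=> m I Hab Hdis; rewrite lt_min => /andP[/(Hd m I Hab Hdis) s1 s2].
apply: (@le_lt_trans _ _ (\sum_(k < m)
    (K * `|f (I k).2 - f (I k).1| + K * (K * ((I k).2 - (I k).1))))).
  apply: ler_sum => k _; have [h1 [h2 h3]] := Hab k.
  have -> : w (I k).2 * f (I k).2 - w (I k).1 * f (I k).1 =
    w (I k).2 * (f (I k).2 - f (I k).1) + f (I k).1 * (w (I k).2 - w (I k).1) by ring.
  apply: le_trans (ler_normD _ _) _; rewrite !normrM.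
  apply: lerD; first by apply: ler_wpM2r => //; apply: (bd _ _ h3).1; exact: le_trans h2.
  apply: ler_pM => //; last exact: wL.
  by apply: (bd _ h1 _).2; exact: le_trans h3.
rewrite big_split /= -!mulr_sumr.
have E1 : K * \sum_(k < m) `|f (I k).2 - f (I k).1| < e / 2.
  have <- : K * (e / (2 * K)) = e / 2 by field; rewrite gt_eqF.
  by rewrite ltr_pM2l.
have E2 : K * (K * \sum_(k < m) ((I k).2 - (I k).1)) < e / 2.
  have <- : K * (K * (e / (2 * (K * K)))) = e / 2 by field; rewrite gt_eqF.
  by rewrite !ltr_pM2l.
lra.
Qed.

Lemma sum_itv_length_le_measure {R : realType} (U : set R) (m : nat) (I : 'I_m -> R * R) :
  measurable U ->
  (forall k, (I k).1 <= (I k).2) ->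
  (forall k l, k != l -> (I k).2 <= (I l).1 \/ (I l).2 <= (I k).1) ->
  (forall k, [set` `](I k).1, (I k).2]] `<=` U) ->
  ((\sum_(k < m) ((I k).2 - (I k).1))%:E <= (@lebesgue_measure R) U)%E.
Proof.
move=> mU le12 dis sub.
pose F k := [set` `](I k).1, (I k).2]] : set R.
have mF k : measurable (F k) by exact: measurable_itv.
have tF : trivIset setT F.
  move=> k l _ _ [z []]; rewrite /F /= !in_itv /= => /andP[a1 a2] /andP[b1 b2].
  apply/eqP/negPn/negP => /dis [h|h].
  - by have := le_lt_trans (le_trans a2 h) b1; rewrite ltxx.
  - by have := le_lt_trans (le_trans b2 h) a1; rewrite ltxx.
have cover : \big[setU/set0]_(k < m | xpredT k) F k `<=` U.
  apply: (big_ind (fun A => A `<=` U)) => //; first by move=> A B AU BU z [/AU|/BU].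
  by move=> k _; exact: sub.
have mcover : measurable (\big[setU/set0]_(k < m | xpredT k) F k).
  by apply: bigsetU_measurable => k _.
rewrite -sumEFin; apply: (@le_trans _ _ ((@lebesgue_measure R) (\big[setU/set0]_(k < m | xpredT k) F k))).
  rewrite (@measure_bigsetU_ord _ _ _ (@lebesgue_measure R) m xpredT F mF tF).
  apply: lee_sum => k _.
  rewrite /F /= lebesgue_measure_itv /= lte_fin.
  by case: ltP => h //; rewrite lee_fin subr_le0.
by apply: le_measure; rewrite ?inE.
Qed.

Definition right_dini_ge0 {R : realType} (g : R -> R) (t : R) :=
  forall e, 0 < e -> exists2 h, 0 < h &
    forall u, 0 < u -> u <= h -> g t - e * u <= g (t + u).

Lemma derive1_ge0_right_dini {R : realType} (g : R -> R) t :
  derivable g t 1 -> 0 <= derive1 g t -> right_dini_ge0 g t.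
Proof.
move=> dg d0 e e0.
have cv : (fun h : R => h^-1 *: ((g \o shift t) (h *: (1:R)) - g t)) @ 0^' --> derive1 g t.
  by rewrite derive1E; exact: dg.
move/cvgrPdist_lt: cv => /(_ e e0).
rewrite near_withinE => /nbhs_ballP [r /= r0 Hr].
exists (r / 2); first by rewrite divr_gt0.
move=> u u0 ur.
have bu : ball 0 r u.
  rewrite /ball /= sub0r normrN gtr0_norm //.
  by apply: le_lt_trans ur _; rewrite ltr_pdivrMr // ltr_pMr // ltr1n.
have /= := Hr u bu; rewrite gt_eqF // => /(_ isT) near_u.
have : `|derive1 g t - u^-1 * (g (u * 1 + t) - g t)| < e := near_u.
rewrite mulr1 [u + t]addrC ltr_distlC => /andP[+ _].
rewrite -(ltr_pM2r u0) mulrAC mulVf ?gt_eqF // mul1r => H.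
have : - e * u < g (t + u) - g t by apply: le_lt_trans H; rewrite ler_pM2r //; lra.
lra.
Qed.

Section Creep.
Variables (R : realType) (a b : R) (g : R -> R) (U : set R) (eps del : R).
Hypothesis mU : measurable U.
Hypothesis muU : ((@lebesgue_measure R) U < del%:E)%E.
Hypothesis g_del : forall (m : nat) (I : 'I_m -> R * R),
  (forall k, a <= (I k).1 /\ (I k).1 <= (I k).2 /\ (I k).2 <= b) ->
  (forall k l, k != l -> (I k).2 <= (I l).1 \/ (I l).2 <= (I k).1) ->
  \sum_(k < m) ((I k).2 - (I k).1) < del ->
  \sum_(k < m) `|g (I k).2 - g (I k).1| < eps.

Definition disjoint_itvs_in (s : R) (m : nat) (I : 'I_m -> R * R) :=
  [/\ (forall k, a <= (I k).1 /\ (I k).1 <= (I k).2 /\ (I k).2 <= s),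
      (forall k l, k != l -> (I k).2 <= (I l).1 \/ (I l).2 <= (I k).1) &
      (forall k, [set` `](I k).1, (I k).2]] `<=` U)].

Definition variation_sums (s : R) : set R := [set v | exists m I,
  disjoint_itvs_in s m I /\ v = \sum_(k < m) `|g (I k).2 - g (I k).1|].

Definition variation_in (s : R) := sup (variation_sums s).

Lemma variation_sums0 s : variation_sums s 0.
Proof.
exists 0%N, (fun _ => (0, 0)); split; last by rewrite big_ord0.
by split => [[]|[]|[]].
Qed.

Lemma variation_sums_lt {s} : s <= b -> forall v, variation_sums s v -> v < eps.
Proof.
move=> sb v [m [I [[H1 H2 H3] ->]]]; apply: g_del => //.
  by move=> k; have [? [? ?]] := H1 k; do !split => //; exact: le_trans sb.
have := @sum_itv_length_le_measure R U m I mU (fun k => (H1 k).2.1) H2 H3.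
by move=> /le_lt_trans /(_ muU); rewrite lte_fin.
Qed.

Lemma variation_in_ge {s v} : s <= b -> variation_sums s v -> v <= variation_in s.
Proof.
move=> sb Sv; apply: ub_le_sup => //.
by exists eps => w /(variation_sums_lt sb) /ltW.
Qed.

Lemma variation_in_ge0 {s} : s <= b -> 0 <= variation_in s.
Proof. by move=> sb; apply: variation_in_ge => //; exact: variation_sums0. Qed.

Lemma variation_in_le {s} : s <= b -> variation_in s <= eps.
Proof.
move=> sb; apply: ge_sup; first by exists 0; exact: variation_sums0.
by move=> v /(variation_sums_lt sb) /ltW.
Qed.

Lemma variation_in_mono {s s'} : s <= s' -> s' <= b -> variation_in s <= variation_in s'.
Proof.
move=> ss' s'b; apply: ge_sup; first by exists 0; exact: variation_sums0.
move=> v [m [I [[H1 H2 H3] ->]]]; apply: variation_in_ge => //.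
exists m, I; split => //; split => // k.
by have [? [? ?]] := H1 k; do !split => //; exact: le_trans ss'.
Qed.

Lemma variation_in_extend {s s'} : a <= s -> s <= s' -> s' <= b ->
  [set` `]s, s']] `<=` U -> variation_in s + `|g s' - g s| <= variation_in s'.
Proof.
move=> as_ ss' s'b sub; rewrite -lerBrDr.
apply: ge_sup; first by exists 0; exact: variation_sums0.
move=> v [m [I [[H1 H2 H3] ->]]]; rewrite lerBrDr; apply: variation_in_ge => //.
pose I' k := if unlift ord_max k is Some j then I j else (s, s').
exists m.+1, I'; split; first split.
- move=> k; rewrite /I'; case: (unliftP ord_max k) => [j _|_] //.
  by have [? [? ?]] := H1 j; do !split => //; exact: le_trans ss'.
- move=> k l kl; rewrite /I'.
  case: (unliftP ord_max k) => [j Ek|Ek]; case: (unliftP ord_max l) => [j' El|El].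
  + by apply: H2; apply: contra kl => /eqP jj; rewrite Ek El jj.
  + by left; have [_ [_ ?]] := H1 j.
  + by right; have [_ [_ ?]] := H1 j'.
  + by move: kl; rewrite Ek El eqxx.
- by move=> k; rewrite /I'; case: (unliftP ord_max k).
rewrite big_ord_recr /= /I' unlift_none /=; congr (_ + _); apply: eq_bigr => k _.
have -> : widen_ord (leqnSn m) k = lift ord_max k.
  by apply: val_inj; rewrite /= /bump leqNgt ltn_ord.
by rewrite liftK.
Qed.

Variable N : set R.
Hypothesis ab : a <= b.
Hypothesis eps0 : 0 < eps.
Hypothesis acg : abs_continuous_on a b g.
Hypothesis NU : N `<=` U.
Hypothesis oU : open U.
Hypothesis dini : forall t, a <= t -> t < b -> ~ N t -> right_dini_ge0 g t.

Definition creep_bound (u : R) := g a - eps * (u - a) - variation_in u.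

Lemma creep_from_left s : a < s -> s <= b ->
  (forall u, a <= u -> u < s -> creep_bound u <= g u) -> creep_bound s <= g s.
Proof.
move=> as_ sb Plt; rewrite leNgt; apply/negP => hlt.
pose gap := creep_bound s - g s.
have gap0 : 0 < gap by rewrite /gap subr_gt0.
have [d d0 Hd] := abs_continuous_on_ucont acg gap gap0.
pose u := Num.max a (s - d / 2).
have au : a <= u by rewrite le_max lexx.
have us : u < s by rewrite /u gt_max as_ /= ltrBlDr ltrDl divr_gt0.
have sud : s - u < d.
  have : s - d / 2 <= u by rewrite le_max lexx orbT.
  have : d / 2 < d by rewrite ltr_pdivrMr // ltr_pMr // ltr1n.
  lra.
have := Hd u s au (ltW us) sb sud; rewrite ltr_norml => /andP[h1 h2].
have := Plt u au us; have := variation_in_mono (ltW us) sb.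
have : eps * (u - a) <= eps * (s - a) by apply: ler_wpM2l; [exact: ltW | lra].
rewrite /gap /creep_bound in h1 h2 *; lra.
Qed.

Lemma creep_to_right s : a <= s -> s < b -> creep_bound s <= g s ->
  exists2 s', s < s' & forall u, s < u -> u <= s' -> u <= b -> creep_bound u <= g u.
Proof.
rewrite /creep_bound => as_ slb Ps; case: (pselect (N s)) => Ns.
- have : nbhs s U by apply: open_nbhs_nbhs; split => //; exact: NU.
  move=> /nbhs_ballP [r /= r0 Hr].
  exists (s + r / 2); first by rewrite ltrDl divr_gt0.
  move=> u su usr ub.
  have sub : [set` `]s, u]] `<=` U.
    move=> z /=; rewrite in_itv /= => /andP[sz zu]; apply: Hr.
    rewrite /ball /= distrC ger0_norm; last by rewrite subr_ge0 ltW.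
    have : r / 2 < r by rewrite ltr_pdivrMr // ltr_pMr // ltr1n.
    lra.
  have := variation_in_extend as_ (ltW su) ub sub.
  have : eps * (s - a) <= eps * (u - a) by apply: ler_wpM2l; [exact: ltW | lra].
  have := ler_norm (g s - g u); rewrite distrC.
  lra.
- have [h h0 Hh] := dini s as_ slb Ns eps eps0.
  exists (s + h); first by rewrite ltrDl.
  move=> u su ush ub.
  have := Hh (u - s); rewrite subr_gt0 su lerBlDl => /(_ isT ush).
  rewrite [s + (u - s)]addrC subrK => gu.
  have := variation_in_mono (ltW su) ub.
  have : eps * (u - s) = eps * (u - a) - eps * (s - a) by rewrite -mulrBr; congr (_ * _); lra.
  lra.
Qed.

(* Off U, g can only lose eps per unit length; on U it can lose at most the
   variation of g on U, which absolute continuity keeps below eps. *)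
Lemma abs_continuous_creep : g a - eps * (b - a) - eps <= g b.
Proof.
suff : creep_bound b <= g b.
  by rewrite /creep_bound; have := variation_in_le (lexx b); lra.
apply: (@real_induction R a b (fun u => creep_bound u <= g u) ab).
- rewrite /creep_bound subrr mulr0 subr0 lerBlDr lerDl; exact: variation_in_ge0.
- exact: creep_from_left.
- exact: creep_to_right.
Qed.

End Creep.

Lemma abs_continuous_on_nondecreasing {R : realType} {a b : R} {g : R -> R} {N : set R} :
  a <= b -> abs_continuous_on a b g -> measurable N ->
  (@lebesgue_measure R) N = 0%E ->
  (forall t, a <= t -> t < b -> ~ N t -> right_dini_ge0 g t) ->
  g a <= g b.
Proof.
move=> ab acg mN N0 dini.
suff creep eps : 0 < eps -> g a - eps * (b - a) - eps <= g b.
  apply/ler_addgt0Pr => e e0.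
  have c0 : 0 < b - a + 1 by lra.
  have := creep (e / (b - a + 1)) (divr_gt0 e0 c0).
  have : e / (b - a + 1) * (b - a) + e / (b - a + 1) = e by field; rewrite gt_eqF.
  lra.
move=> eps0; have [del del0 Hdel] := acg eps eps0.
have Nfin : ((@lebesgue_measure R) N < +oo)%E by rewrite N0 ltry.
have [U [oU NU muUN]] := lebesgue_regularity_outer mN Nfin del0.
have mU : measurable U := open_measurable oU.
have muU : ((@lebesgue_measure R) U < del%:E)%E.
  rewrite (@measureDI _ _ _ (@lebesgue_measure R) _ _ mU mN).
  apply: le_lt_trans muUN; rewrite -[leRHS]adde0; apply: leeD => //.
  by rewrite -N0; apply: le_measure; rewrite ?inE //; exact: measurableI.
exact: (@abs_continuous_creep R a b g U eps del mU muU Hdel N ab eps0 acg NU oU dini).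
Qed.

Lemma ler_dist_expR {R : realType} (u v : R) : u <= v ->
  `|expR v - expR u| <= expR v * (v - u).
Proof.
move=> uv; rewrite ger0_norm; last by rewrite subr_ge0 ler_expR.
have -> : expR u = expR v * expR (u - v) by rewrite -expRD addrCA subrr addr0.
have : expR v * (1 + (u - v)) <= expR v * expR (u - v).
  by rewrite ler_pM2l ?expR_gt0 // expR_ge1Dx.
have -> : expR v * (1 + (u - v)) = expR v - expR v * (v - u) by ring.
lra.
Qed.

Lemma BR_nonempty {R : realType} {n : nat} (A : 'M[R]_n.+1) (x : 'I_n.+1 -> R) :
  exists y, BR A x y.
Proof.
set r := mxapp A x.
have [i _ r_max] := @arg_maxP _ _ _ ord0 xpredT r isT.
exists (fun j => (j == i)%:R); split.
  split; first by move=> j; exact: ler0n.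
  by rewrite (bigD1 i) //= eqxx big1 ?addr0 // => j /negbTE ->.
move=> z [z0 z1].
have -> : dotv (fun j => (j == i)%:R) r = r i.
  by rewrite /dotv (bigD1 i) //= eqxx mul1r big1 ?addr0 // => j /negbTE ->; rewrite mul0r.
apply: (@le_trans _ _ (\sum_(j < n.+1) z j * r i)); last by rewrite -mulr_suml z1 mul1r.
by apply: ler_sum => j _; apply: ler_wpM2l => //; exact: r_max.
Qed.

Lemma sum_ord3 {V : nmodType} (f : 'I_3 -> V) :
  \sum_(i < 3) f i = f (inord 0) + f (inord 1) + f (inord 2).
Proof.
rewrite (eq_bigr (fun i : 'I_3 => f (inord i))) => [|i _]; last by rewrite inord_val.
by rewrite -(big_mkord xpredT (fun k => f (inord k))) !big_nat_recr //= big_geq // add0r.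
Qed.

Lemma sum_ord7 {V : nmodType} (f : 'I_7 -> V) : \sum_(i < 7) f i =
  f (inord 0) + f (inord 1) + f (inord 2) + f (inord 3) + f (inord 4) + f (inord 5)
  + f (inord 6).
Proof.
rewrite (eq_bigr (fun i : 'I_7 => f (inord i))) => [|i _]; last by rewrite inord_val.
by rewrite -(big_mkord xpredT (fun k => f (inord k))) !big_nat_recr //= big_geq // add0r.
Qed.

Section Blocks.
Context {R : realType}.
Implicit Types (v y : 'I_7 -> R).

(* Strategies 1,2,3 form the block at offset 0, strategies 5,6,7 the block at offset 4. *)
Definition block_sum (o : nat) v : R := \sum_(i < 3) v (inord (i + o)).

Definition block_dist (o : nat) v : 'I_3 -> R := fun i => v (inord (i + o)) / block_sum o v.

Lemma block_sum0 v : block_sum 0 v = v (inord 0) + v (inord 1) + v (inord 2).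
Proof. by rewrite /block_sum sum_ord3 !inordK. Qed.

Lemma block_sum4 v : block_sum 4 v = v (inord 4) + v (inord 5) + v (inord 6).
Proof. by rewrite /block_sum sum_ord3 !inordK. Qed.

Lemma block_sum_ge0_le1 {o v} : (o = 0 \/ o = 4)%N -> simplex 7 v ->
  0 <= block_sum o v <= 1.
Proof.
move=> ho [v0 v1]; rewrite sum_ord7 in v1.
have := v0 (inord 0); have := v0 (inord 1); have := v0 (inord 2); have := v0 (inord 3).
have := v0 (inord 4); have := v0 (inord 5); have := v0 (inord 6).
by case: ho => -> *; rewrite ?block_sum0 ?block_sum4; apply/andP; split; lra.
Qed.

Lemma block_sum_gt0 {o v} : (forall i, 0 <= v i) ->
  ~ (v (inord o) = v (inord o.+1) /\ v (inord o.+1) = v (inord o.+2)) ->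
  0 < block_sum o v.
Proof.
move=> v0 nconst; rewrite /block_sum sum_ord3 !inordK //= add0n add1n add2n.
have := v0 (inord o); have := v0 (inord o.+1); have := v0 (inord o.+2).
case: (ltrP 0 (v (inord o) + v (inord o.+1) + v (inord o.+2))) => // h *.
by exfalso; apply: nconst; split; lra.
Qed.

Lemma mxapp_Umx_block0 (eps : R) {v} : 0 < block_sum 0 v -> forall i : 'I_3,
  mxapp (Umx eps) v (inord (i + 0)) = block_sum 0 v * mxapp (Rmx eps) (block_dist 0 v) i
    + (-10 * v (inord 3) + (- third + eps) * block_sum 4 v).
Proof.
move=> L0 i; rewrite -(inord_val i).
have Ln0 : v (inord 0) + v (inord 1) + v (inord 2) != 0 by rewrite -block_sum0 gt_eqF.
rewrite /mxapp /block_dist sum_ord7 sum_ord3 !block_sum0 block_sum4 !inordK // !addn0.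
by case: i => [[|[|[|k]]] //= _]; rewrite /Umx /Rmx !mxE !inordK //=; field.
Qed.

Lemma mxapp_Umx_block4 (eps : R) {v} : 0 < block_sum 4 v -> forall i : 'I_3,
  mxapp (Umx eps) v (inord (i + 4)) = block_sum 4 v * mxapp (Rmx eps) (block_dist 4 v) i
    + (- third * block_sum 0 v + 10 * v (inord 3)).
Proof.
move=> L0 i; rewrite -(inord_val i).
have Ln0 : v (inord 4) + v (inord 5) + v (inord 6) != 0 by rewrite -block_sum4 gt_eqF.
rewrite /mxapp /block_dist sum_ord7 sum_ord3 block_sum0 !block_sum4 !inordK //.
by case: i => [[|[|[|k]]] //= _]; rewrite /Umx /Rmx !mxE !inordK //=; field.
Qed.

End Blocks.

(* Comparing the best reply with the deviation that redistributes its block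
   mass a0 + a1 + a2 according to w: off the block nothing changes, and on the
   block payoffs are L * r_i + c. *)
Lemma dot3_le_block_ratio {R : realType} (L c a0 a1 a2 w0 w1 w2 r0 r1 r2 : R) :
  0 < L -> 0 < a0 + a1 + a2 -> w0 + w1 + w2 = 1 ->
  (a0 + a1 + a2) * w0 * (L * r0 + c) + (a0 + a1 + a2) * w1 * (L * r1 + c)
    + (a0 + a1 + a2) * w2 * (L * r2 + c)
    <= a0 * (L * r0 + c) + a1 * (L * r1 + c) + a2 * (L * r2 + c) ->
  w0 * r0 + w1 * r1 + w2 * r2 <=
    a0 / (a0 + a1 + a2) * r0 + a1 / (a0 + a1 + a2) * r1 + a2 / (a0 + a1 + a2) * r2.
Proof.
move=> L0 S0 w_sum dev.
have -> : a0 / (a0 + a1 + a2) * r0 + a1 / (a0 + a1 + a2) * r1 + a2 / (a0 + a1 + a2) * r2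
    = (a0 * r0 + a1 * r1 + a2 * r2) / (a0 + a1 + a2) by field; rewrite gt_eqF.
rewrite ler_pdivlMr // -subr_le0 -(pmulr_rle0 _ L0).
have E : L * ((w0 * r0 + w1 * r1 + w2 * r2) * (a0 + a1 + a2) - (a0 * r0 + a1 * r1 + a2 * r2))
  = (a0 + a1 + a2) * w0 * (L * r0 + c) + (a0 + a1 + a2) * w1 * (L * r1 + c)
    + (a0 + a1 + a2) * w2 * (L * r2 + c)
    - (a0 * (L * r0 + c) + a1 * (L * r1 + c) + a2 * (L * r2 + c))
    - c * (a0 + a1 + a2) * (w0 + w1 + w2 - 1) by ring.
by rewrite E w_sum subrr mulr0 subr0 subr_le0.
Qed.

Section BlockBestReply.
Context {R : realType}.

Lemma block_dist_simplex o (y : 'I_7 -> R) : (forall i, 0 <= y i) -> 0 < block_sum o y ->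
  simplex 3 (block_dist o y).
Proof.
move=> y0 Y0; split; first by move=> i; apply: divr_ge0 => //; exact: ltW.
by rewrite -mulr_suml divff // gt_eqF.
Qed.

Lemma BR_block {U : 'M[R]_7} {A : 'M[R]_3} {o : nat} {x y : 'I_7 -> R}
    {xb : 'I_3 -> R} {L c : R} :
  (o = 0 \/ o = 4)%N -> 0 < L -> BR U x y ->
  (forall i : 'I_3, mxapp U x (inord (i + o)) = L * mxapp A xb i + c) ->
  0 < block_sum o y -> BR A xb (block_dist o y).
Proof.
move=> ho L0 [[y0 y1] ybest] hv Y0.
split; first exact: block_dist_simplex.
move=> w [w0 w1]; rewrite sum_ord3 in w1.
set Y := block_sum o y in Y0.
pose y' (j : 'I_7) := if (o <= j < o + 3)%N then Y * w (inord (j - o)) else y j.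
have Yw : Y * w (inord 0) + Y * w (inord 1) + Y * w (inord 2) = Y.
  by rewrite -!mulrDr w1 mulr1.
have y'_simplex : simplex 7 y'.
  split=> [j|]; first by rewrite /y'; case: ifP => _ //; apply: mulr_ge0 => //; exact: ltW.
  move: y1; rewrite !sum_ord7 /y'.
  case: ho => ho; subst o; rewrite !inordK //= ?subSS ?subn0.
  - have : Y = y (inord 0) + y (inord 1) + y (inord 2) by rewrite /Y block_sum0.
    lra.
  - have : Y = y (inord 4) + y (inord 5) + y (inord 6) by rewrite /Y block_sum4.
    lra.
have := ybest y' y'_simplex; rewrite /dotv !sum_ord7 !sum_ord3 /block_dist -/Y /y'.
have := hv (inord 0); have := hv (inord 1); have := hv (inord 2).
case: ho => ho; subst o; rewrite !inordK // ?addSn ?add0n ?addn0 => -> -> ->.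
- rewrite !lerD2r /Y block_sum0 in Y0 *; exact: dot3_le_block_ratio.
- rewrite -!addrA !lerD2l !addrA /Y block_sum4 in Y0 *; exact: dot3_le_block_ratio.
Qed.

End BlockBestReply.

Section BlockDynamics.
Context {R : realType}.
Context {x : R -> 'I_7 -> R} {t : R} {y : 'I_7 -> R}.
Hypothesis x_derivable : forall j, derivable (fun s => x s j) t 1.
Hypothesis x_derive : forall j, derive1 (fun s => x s j) t = y j - x t j.

Lemma coord_is_derive j : is_derive t 1 (fun s => x s j) (y j - x t j).
Proof. by have := derivableP (x_derivable j); rewrite -derive1E x_derive. Qed.

Lemma block_sum_is_derive o :
  is_derive t 1 (fun s => block_sum o (x s)) (block_sum o y - block_sum o (x t)).
Proof.
rewrite /block_sum -sumrB.
have -> : (fun s => \sum_(i < 3) x s (inord (i + o))) = \sum_(i < 3) (fun s => x s (inord (i + o))).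
  by rewrite fct_sumE.
by apply: is_derive_sum => i; exact: coord_is_derive.
Qed.

Lemma block_dist_is_derive o i : 0 < block_sum o (x t) ->
  is_derive t 1 (fun s => block_dist o (x s) i)
    ((y (inord (i + o)) - block_sum o y * block_dist o (x t) i) / block_sum o (x t)).
Proof.
move=> L0; have Ln0 : block_sum o (x t) != 0 by rewrite gt_eqF.
have D := is_deriveM (coord_is_derive (inord (i + o))) (is_deriveV Ln0 (block_sum_is_derive o)).
rewrite /block_dist; apply: is_derive_eq; rewrite /GRing.scale /=; by field.
Qed.

(* lambda' / lambda = Y / lambda - 1, where Y is the mass the best reply puts on
   the block; the case Y = 0 is where any best reply of A will do. *)
Lemma block_dist_dynamics {U : 'M[R]_7} {A : 'M[R]_3} {o : nat} {c : R} :
  (o = 0 \/ o = 4)%N -> BR U (x t) y -> 0 < block_sum o (x t) ->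
  (forall i : 'I_3, mxapp U (x t) (inord (i + o)) =
     block_sum o (x t) * mxapp A (block_dist o (x t)) i + c) ->
  derivable (fun s => block_sum o (x s)) t 1 /\
  (forall i, derivable (fun s => block_dist o (x s) i) t 1) /\
  exists2 z, BR A (block_dist o (x t)) z &
    forall i, derive1 (fun s => block_dist o (x s) i) t =
      (1 + derive1 (fun s => block_sum o (x s)) t / block_sum o (x t))
        * (z i - block_dist o (x t) i).
Proof.
move=> ho yBR L0 hv; have Ln0 : block_sum o (x t) != 0 by rewrite gt_eqF.
have DL := block_sum_is_derive o; have Dq := block_dist_is_derive o ^~ L0.
split; first exact: (@ex_derive _ _ _ _ _ _ _ DL).
split; first by move=> i; exact: (@ex_derive _ _ _ _ _ _ _ (Dq i)).
have [[y0 _] _] := yBR.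
have factorE : 1 + derive1 (fun s => block_sum o (x s)) t / block_sum o (x t)
    = block_sum o y / block_sum o (x t).
  by rewrite derive1E derive_val; field.
have [Y0|] := ltrP 0 (block_sum o y).
- exists (block_dist o y); first exact: (BR_block ho L0 yBR hv Y0).
  move=> i; rewrite derive1E derive_val factorE /block_dist.
  by field; rewrite Ln0 gt_eqF.
- have [z zBR] := BR_nonempty A (block_dist o (x t)).
  move=> Yle0; have Y0 : block_sum o y = 0.
    by apply/eqP; rewrite eq_le Yle0 sumr_ge0.
  exists z => // i; rewrite derive1E derive_val factorE Y0.
  have -> : y (inord (i + o)) = 0.
    by apply: (@psumr_eq0P _ _ xpredT (fun k : 'I_3 => y (inord (k + o)))).
  by rewrite !(mul0r, subr0).
Qed.

End BlockDynamics.

Lemma block_sum_abs_continuous {R : realType} (o : nat) (x : R -> 'I_7 -> R) (a b : R) :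
  (forall i, abs_continuous_on a b (fun s => x s i)) ->
  abs_continuous_on a b (fun s => block_sum o (x s)).
Proof.
move=> xac; have -> : (fun s => block_sum o (x s)) =
    fun s => x s (inord (0 + o)) + x s (inord (1 + o)) + x s (inord (2 + o)).
  by apply/funext => s; rewrite /block_sum sum_ord3 !inordK.
by apply: abs_continuous_onD; [apply: abs_continuous_onD|]; exact: xac.
Qed.

Lemma BR_solution_ae {R : realType} {n : nat} {U : 'M[R]_n} {x : R -> 'I_n -> R} :
  BR_solution U x -> exists N : set R,
  [/\ measurable N, (@lebesgue_measure R) N = 0%E &
    forall t, 0 <= t -> ~ N t ->
      (forall i, derivable (fun s => x s i) t 1) /\
      exists2 y, BR U (x t) y & forall i, derive1 (fun s => x s i) t = y i - x t i].
Proof.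
move=> [_ [_ [N [mN N0 sub]]]]; exists N; split => // t t0 Nt.
by have := contrapT (fun nP => Nt (sub t nP)); apply.
Qed.

Lemma block_sum_gt0_forward {R : realType} {U : 'M[R]_7} {x : R -> 'I_7 -> R} {o : nat} :
  (o = 0 \/ o = 4)%N -> BR_solution U x -> 0 < block_sum o (x 0) ->
  forall T, 0 <= T -> 0 < block_sum o (x T).
Proof.
move=> ho sol L0 T T0; have [xS [xac _]] := sol.
have [N [mN N0 ae]] := BR_solution_ae sol.
pose g t := expR t * block_sum o (x t).
have acg : abs_continuous_on 0 T g.
  have K1 : 1 <= expR T by have := expR_ge1Dx T; lra.
  apply: (@abs_continuous_onM _ 0 T (expR T)); first exact: expR_gt0.
  - move=> u v _ uv vT; apply: le_trans (@ler_dist_expR R u v uv) _.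
    by rewrite ler_wpM2r ?subr_ge0 // ler_expR.
  - move=> t t0 tT; have /andP[b0 b1] := block_sum_ge0_le1 ho (xS t t0).
    by rewrite !ger0_norm ?expR_ge0 // ler_expR tT (le_trans b1 K1).
  - by apply: block_sum_abs_continuous => i; exact: xac.
have dini t : 0 <= t -> t < T -> ~ N t -> right_dini_ge0 g t.
  move=> t0 _ Nt; have [der [y [[y0 _] _] dy]] := ae t t0 Nt.
  have Dg := is_deriveM (is_derive_expR t) (block_sum_is_derive der dy o).
  apply: derive1_ge0_right_dini; first exact: (@ex_derive _ _ _ _ _ _ _ Dg).
  rewrite derive1E derive_val /GRing.scale /=.
  have -> : expR t * (block_sum o y - block_sum o (x t)) + block_sum o (x t) * expR t =
    expR t * block_sum o y by ring.
  by apply: mulr_ge0; [exact: expR_ge0 | exact: sumr_ge0].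
have := abs_continuous_on_nondecreasing T0 acg mN N0 dini.
rewrite /g expR0 mul1r => /(lt_le_trans L0).
by rewrite pmulr_rgt0 // expR_gt0.
Qed.
Theorem lemma6 (R : realType) (eps : R) (x : R -> 'I_7 -> R) :
  0 < eps -> eps < 2 / 9 ->
  BR_solution (Umx eps) x ->
  ~ (x 0 (inord 0) = x 0 (inord 1) /\ x 0 (inord 1) = x 0 (inord 2)) ->
  ~ (x 0 (inord 4) = x 0 (inord 5) /\ x 0 (inord 5) = x 0 (inord 6)) ->
  (forall t, 0 <= t -> 0 < lam x t /\ 0 < muu x t) /\
  {ae (@lebesgue_measure R), forall t, 0 <= t ->
     (derivable (lam x) t 1 /\ derivable (muu x) t 1 /\
      (forall i, derivable (fun s => xbar x s i) t 1) /\
      (forall i, derivable (fun s => xhat x s i) t 1)) /\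
     (exists2 y, BR (Rmx eps) (xbar x t) y &
        forall i, derive1 (fun s => xbar x s i) t
                  = (1 + derive1 (lam x) t / lam x t) * (y i - xbar x t i)) /\
     (exists2 y, BR (Rmx eps) (xhat x t) y &
        forall i, derive1 (fun s => xhat x s i) t
                  = (1 + derive1 (muu x) t / muu x t) * (y i - xhat x t i))}.
Proof.
move=> _ _ sol nconst0 nconst4.
have lamE : lam x = fun t => block_sum 0 (x t).
  by apply/funext => t; apply: eq_bigr => i _; rewrite addn0.
have xbarE : xbar x = fun t => block_dist 0 (x t).
  by apply/funext => t; apply/funext => i; rewrite /xbar /block_dist lamE addn0.
have [x0 _] := sol.1 0 (lexx 0).
have L0 := block_sum_gt0_forward (or_introl erefl) sol (block_sum_gt0 x0 nconst0).
have M0 := block_sum_gt0_forward (or_intror erefl) sol (block_sum_gt0 x0 nconst4).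
split=> [t t0|]; first by rewrite lamE; split; [exact: L0 | exact: M0].
have [N [mN N0 ae]] := BR_solution_ae sol.
exists N; split => // t nP; apply: contrapT => Nt; apply: nP => t0.
have [der [y yBR dy]] := ae t t0 Nt.
have [dL [dq [z zBR ez]]] := block_dist_dynamics der dy (or_introl erefl) yBR (L0 t t0)
  (mxapp_Umx_block0 eps (L0 t t0)).
have [dM [dh [w wBR ew]]] := block_dist_dynamics der dy (or_intror erefl) yBR (M0 t t0)
  (mxapp_Umx_block4 eps (M0 t t0)).
by rewrite lamE xbarE; do !split => //; [exists z | exists w].
Qed.
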